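(* Let $\mathfrak h\subset\mathfrak g$ be a Lie subalgebra, $\mathfrak p$ its $h_0$-orthogonal complement, and let $\Psi$ be the $h_0$-orthogonal projection onto $\mathfrak h$, so $\Phi_t=(I-t\Psi)^{-1}$ and $h_t(X,Y)=h_0\big(\tfrac1{1-t}X^{\mathfrak h}+X^{\mathfrak p},Y\big)$. Then for all $X,Y\in\mathfrak g$ and all $t<1$, $$\kappa(t)=\tfrac14|[X,Y]|^2-\tfrac34|[X,Y]^{\mathfrak h}|^2t+\tfrac34|[X^{\mathfrak h},Y^{\mathfrak h}]|^2t^2-\tfrac14|[X^{\mathfrak h},Y^{\mathfrak h}]|^2t^3-\tfrac34|[X^{\mathfrak p},Y^{\mathfrak p}]^{\mathfrak h}|^2\frac{t^2}{1-t}.$$ In particular, if $\mathfrak h$ is abelian, $\kappa(t)=\tfrac14|[X,Y]|^2-\tfrac34|[X,Y]^{\mathfrak h}|^2\,\frac{t}{1-t}$ for $-\infty<t<1$.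
   Context: $G$ is a compact Lie group with Lie algebra $\mathfrak g$ and bi-invariant metric $h_0=\langle\cdot,\cdot\rangle$, $|Z|^2=\langle Z,Z\rangle$. For $Z\in\mathfrak g$, $Z^{\mathfrak h}$ and $Z^{\mathfrak p}$ denote the $h_0$-orthogonal projections onto $\mathfrak h$ and $\mathfrak p=\mathfrak h^\perp$. $h_t$ is the left-invariant metric with $h_t(X,Y)=\langle\Phi_tX,Y\rangle$ on $\mathfrak g$. The unnormalized sectional curvature is $k_h(Z_1,Z_2)=h(R_h(Z_1,Z_2)Z_2,Z_1)$, and for fixed $X,Y$, $\kappa(t)=k_{h_t}(\Phi_t^{-1}X,\Phi_t^{-1}Y)$. *)

(* The Lie algebra g is modelled as R^n (row vectors 'rV[R]_n)
   with the standard inner product as the bi-invariant metric h0. *)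
From HB Require Import structures.
From mathcomp Require Import all_boot all_order all_algebra.
From mathcomp Require Import reals.
Set Implicit Arguments. Unset Strict Implicit. Unset Printing Implicit Defensive.
Import Order.TTheory GRing.Theory Num.Theory.
Local Open Scope ring_scope.

Section Defs.
Variables (R : realType) (n : nat).
Notation V := 'rV[R]_n.

Definition dot (u v : V) : R := (u *m v^T) 0 0.
Definition sqn (u : V) : R := dot u u.

Definition is_lie_bracket (br : V -> V -> V) : Prop :=
  [/\ (forall (a : R) X X' Y, br (a *: X + X') Y = a *: br X Y + br X' Y),
      (forall (a : R) X Y Y', br X (a *: Y + Y') = a *: br X Y + br X Y'),
      (forall X, br X X = 0) &
      (forall X Y Z, br X (br Y Z) + br Y (br Z X) + br Z (br X Y) = 0)].

(* h0 is bi-invariant, i.e. ad-invariant: <[X,Y],Z> + <Y,[X,Z]> = 0 *)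
Definition ad_invariant (br : V -> V -> V) : Prop :=
  forall X Y Z, dot (br X Y) Z + dot Y (br X Z) = 0.

Definition lie_subalgebra (br : V -> V -> V) (H : 'M[R]_n) : Prop :=
  forall X Y : V, (X <= H)%MS -> (Y <= H)%MS -> (br X Y <= H)%MS.

Definition orth_proj (H P : 'M[R]_n) : Prop :=
  forall X : V, (X *m P <= H)%MS /\
    (forall Z : V, (Z <= H)%MS -> dot (X - X *m P) Z = 0).

Definition abelian_sub (br : V -> V -> V) (H : 'M[R]_n) : Prop :=
  forall X Y : V, (X <= H)%MS -> (Y <= H)%MS -> br X Y = 0.

(* Left-invariant metric h(X,Y) = <X Phi, Y> given by a matrix Phi *)
Definition lmetric (Phi : 'M[R]_n) (u v : V) : R := dot (u *m Phi) v.

(* Levi-Civita connection of the left-invariant metric on left-invariant fields,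
   given by the Koszul formula
   2 h(nabla_X Y, Z) = h([X,Y],Z) - h([Y,Z],X) + h([Z,X],Y). *)
Definition lc_conn (Phi : 'M[R]_n) (br : V -> V -> V) (X Y : V) : V :=
  (\row_j ((lmetric Phi (br X Y) (delta_mx 0 j)
           - lmetric Phi (br Y (delta_mx 0 j)) X
           + lmetric Phi (br (delta_mx 0 j) X) Y) / 2)) *m invmx Phi.

Definition curv (Phi : 'M[R]_n) (br : V -> V -> V) (X Y Z : V) : V :=
  lc_conn Phi br X (lc_conn Phi br Y Z) - lc_conn Phi br Y (lc_conn Phi br X Z)
  - lc_conn Phi br (br X Y) Z.

(* unnormalized sectional curvature k_h(X,Y) = h(R(X,Y)Y, X) *)
Definition seccurv (Phi : 'M[R]_n) (br : V -> V -> V) (X Y : V) : R :=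
  lmetric Phi (curv Phi br X Y Y) X.

Definition Phit (P : 'M[R]_n) (t : R) : 'M[R]_n := invmx (1%:M - t *: P).

End Defs.

From HB Require Import structures.
From mathcomp Require Import all_boot all_order all_algebra.
From mathcomp Require Import reals.
From mathcomp Require Import ring lra.
Set Implicit Arguments. Unset Strict Implicit. Unset Printing Implicit Defensive.
Import Order.TTheory GRing.Theory Num.Theory.
Local Open Scope ring_scope.

(* Because Psi is the orthogonal projection onto h, Phi_t = I + t/(1-t) Psi and
   Phi_t^-1 X = X^p + (1-t) X^h.  Ad-invariance of h_0 together with [h,h] <= h and
   [h,p] _|_ h turns the Koszul formula into the explicit Levi-Civita connection
   nabla_A B = 1/2 [A,B] + t/(2(1-t)) ([B,A^h] + [A,B^h]).  Metric compatibility writes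
   kappa through nabla_A A, nabla_B B, nabla_A B, nabla_B A and one Koszul term; with
   A = X^p + (1-t) X^h and B = Y^p + (1-t) Y^h everything becomes a polynomial in t whose
   coefficients are inner products of brackets of X^h, X^p, Y^h, Y^p. *)

Section InnerProduct.
Variables (R : realType) (n : nat).
Implicit Types u v w : 'rV[R]_n.

Lemma dotC u v : dot u v = dot v u.
Proof. by rewrite /dot !mxE; apply: eq_bigr => j _; rewrite !mxE mulrC. Qed.

Lemma dotDl u v w : dot (u + v) w = dot u w + dot v w.
Proof. by rewrite /dot mulmxDl mxE. Qed.

Lemma dotZl (a : R) u w : dot (a *: u) w = a * dot u w.
Proof. by rewrite /dot -scalemxAl mxE. Qed.

Lemma dotNl u w : dot (- u) w = - dot u w.
Proof. by rewrite -scaleN1r dotZl mulN1r. Qed.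

Lemma dotBl u v w : dot (u - v) w = dot u w - dot v w.
Proof. by rewrite dotDl dotNl. Qed.

Lemma dot0l w : dot 0 w = 0.
Proof. by rewrite -(scale0r 0) dotZl mul0r. Qed.

Lemma dotDr u v w : dot w (u + v) = dot w u + dot w v.
Proof. by rewrite dotC dotDl !(dotC w). Qed.

Lemma dotZr (a : R) u w : dot w (a *: u) = a * dot w u.
Proof. by rewrite dotC dotZl dotC. Qed.

Lemma dotNr u w : dot w (- u) = - dot w u.
Proof. by rewrite dotC dotNl dotC. Qed.

Lemma dotBr u v w : dot w (u - v) = dot w u - dot w v.
Proof. by rewrite dotDr dotNr. Qed.

Lemma dot0r w : dot w 0 = 0.
Proof. by rewrite dotC dot0l. Qed.

Lemma dot_delta u j : dot u (delta_mx 0 j) = u 0 j.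
Proof. by rewrite /dot trmx_delta -colE mxE. Qed.

Lemma sqn_eq0 u : sqn u = 0 -> u = 0.
Proof.
rewrite /sqn /dot mxE => /eqP; rewrite psumr_eq0 => [/allP u0|j _]; last first.
  by rewrite mxE -expr2 sqr_ge0.
apply/rowP => j; have /implyP := u0 j (mem_index_enum j).
by rewrite mxE mulf_eq0 orbb => /(_ isT) /eqP ->; rewrite mxE.
Qed.

Lemma dot_inj u v : (forall w, dot u w = dot v w) -> u = v.
Proof. by move=> uv; apply/rowP => j; rewrite -!dot_delta. Qed.

Lemma lmetricBl (Phi : 'M[R]_n) u v w :
  lmetric Phi (u - v) w = lmetric Phi u w - lmetric Phi v w.
Proof. by rewrite /lmetric mulmxBl dotBl. Qed.

End InnerProduct.

Ltac dot_ring := apply: dot_inj => ?; rewrite !(dotDl, dotNl, dotZl); ring.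

Section LieAlgebra.
Variables (R : realType) (n : nat) (br : 'rV[R]_n -> 'rV[R]_n -> 'rV[R]_n).
Hypotheses (hbr : is_lie_bracket br) (had : ad_invariant br).
Implicit Types X Y Z : 'rV[R]_n.

Lemma br0l Y : br 0 Y = 0.
Proof.
case: hbr => linl _ _ _; have := linl 1 0 0 Y.
by rewrite !scale1r addr0 => /(congr1 (fun Z => Z - br 0 Y)); rewrite addrK subrr => <-.
Qed.

Lemma br0r X : br X 0 = 0.
Proof.
case: hbr => _ linr _ _; have := linr 1 X 0 0.
by rewrite !scale1r addr0 => /(congr1 (fun Z => Z - br X 0)); rewrite addrK subrr => <-.
Qed.

Lemma brDl X X' Y : br (X + X') Y = br X Y + br X' Y.
Proof. by case: hbr => linl _ _ _; rewrite -{1}(scale1r X) linl scale1r. Qed.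

Lemma brDr X Y Y' : br X (Y + Y') = br X Y + br X Y'.
Proof. by case: hbr => _ linr _ _; rewrite -{1}(scale1r Y) linr scale1r. Qed.

Lemma brZl a X Y : br (a *: X) Y = a *: br X Y.
Proof. by case: hbr => linl _ _ _; rewrite -[a *: X]addr0 linl br0l addr0. Qed.

Lemma brZr a X Y : br X (a *: Y) = a *: br X Y.
Proof. by case: hbr => _ linr _ _; rewrite -[a *: Y]addr0 linr br0r addr0. Qed.

Lemma brxx X : br X X = 0.
Proof. by case: hbr. Qed.

Lemma brC X Y : br X Y = - br Y X.
Proof.
apply/eqP; rewrite -addr_eq0; apply/eqP.
by have := brxx (X + Y); rewrite brDl !brDr !brxx add0r addr0.
Qed.

Lemma dot_brA X Y Z : dot (br X Y) Z = dot X (br Y Z).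
Proof. by rewrite (brC X Y) dotNl; apply/esym/eqP; rewrite -addr_eq0 addrC had. Qed.

Lemma dot_br_jacobi A B C D :
  dot (br A B) (br C D) + dot (br A C) (br D B) + dot (br A D) (br B C) = 0.
Proof. by rewrite !dot_brA -!dotDr; case: hbr => _ _ _ ->; rewrite dot0r. Qed.

Section OrthogonalSplitting.
Variables H P : 'M[R]_n.
Hypotheses (hP : orth_proj H P) (hsub : lie_subalgebra br H).
Implicit Types u w x y : 'rV[R]_n.

Lemma proj_sub u : (u *m P <= H)%MS.
Proof. by case: (hP u). Qed.

Lemma dot_proj_compl u w : (w <= H)%MS -> dot (u - u *m P) w = 0.
Proof. by case: (hP u) => _; apply. Qed.

Lemma dot_projC u w : dot (u *m P) w = dot u (w *m P).
Proof.
have /eqP := dot_proj_compl w (proj_sub u); have /eqP := dot_proj_compl u (proj_sub w).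
rewrite !dotBl !subr_eq0 => /eqP uw /eqP wu.
by rewrite dotC wu dotC -uw.
Qed.

Lemma proj_id w : (w <= H)%MS -> w *m P = w.
Proof.
move=> wH; have wpH : (w - w *m P <= H)%MS by rewrite addmx_sub ?eqmx_opp ?proj_sub.
by apply/esym/eqP; rewrite -subr_eq0; apply/eqP/sqn_eq0/dot_proj_compl.
Qed.

Lemma projK u : u *m P *m P = u *m P.
Proof. exact/proj_id/proj_sub. Qed.

Lemma mulmx_proj_idem : P *m P = P.
Proof. by apply/row_matrixP => i; rewrite !rowE mulmxA projK. Qed.

Lemma proj_compl u : (u - u *m P) *m P = 0.
Proof. by rewrite mulmxBl projK subrr. Qed.

Lemma proj_split (a : R) x u : x *m P = x -> u *m P = 0 -> (u + a *: x) *m P = a *: x.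
Proof. by move=> hx hu; rewrite mulmxDl hu add0r -scalemxAl hx. Qed.

Lemma br_proj_hh x y : x *m P = x -> y *m P = y -> br x y *m P = br x y.
Proof. by move=> <- <-; apply/proj_id/hsub; apply: proj_sub. Qed.

(* <[x,u],w> = -<u,[x,w]>, and [x,w^h] lies in h. *)
Lemma br_proj_hp x u : x *m P = x -> u *m P = 0 -> br x u *m P = 0.
Proof.
move=> hx hu; apply: dot_inj => w.
rewrite dot0l dot_projC (brC x) dotNl dot_brA.
by rewrite -(br_proj_hh hx (projK w)) -dot_projC hu dot0l oppr0.
Qed.

Lemma br_proj_ph u x : u *m P = 0 -> x *m P = x -> br u x *m P = 0.
Proof. by move=> hu hx; rewrite brC mulNmx br_proj_hp ?oppr0. Qed.

Lemma br_proj_split x y u v : x *m P = x -> y *m P = y -> u *m P = 0 -> v *m P = 0 ->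
  br (x + u) (y + v) *m P = br x y + br u v *m P.
Proof.
move=> hx hy hu hv; rewrite !(brDl, brDr, mulmxDl) (br_proj_hh hx hy).
by rewrite (br_proj_hp hx hv) (br_proj_ph hu hy) add0r addr0.
Qed.

Definition stretch (t : R) := t / (1 - t).

Section DeformedMetric.
Variable t : R.
Hypothesis ht : t < 1.
Implicit Types A B W : 'rV[R]_n.

Let t1_neq0 : 1 - t != 0. Proof. by rewrite subr_eq0 gt_eqF. Qed.

Lemma Phit_inv : (1%:M - t *: P) *m (1%:M + stretch t *: P) = 1%:M.
Proof.
rewrite mulmxDr mulmx1 !mulmxBl mul1mx -!scalemxAl -scalemxAr mulmx_proj_idem.
by apply/matrixP => i j; rewrite !mxE /stretch; field; exact: t1_neq0.
Qed.

Lemma Phit_unit : Phit P t \in unitmx.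
Proof. by rewrite unitmx_inv; case: (mulmx1_unit Phit_inv). Qed.

Lemma PhitE : Phit P t = 1%:M + stretch t *: P.
Proof.
have [unit_t _] := mulmx1_unit Phit_inv.
by rewrite /Phit -[RHS](mulKmx unit_t) Phit_inv mulmx1.
Qed.

Lemma mulmx_Phit u : u *m Phit P t = u + stretch t *: (u *m P).
Proof. by rewrite PhitE mulmxDr mulmx1 scalemxAr. Qed.

Lemma mulmx_invPhit u : u *m invmx (Phit P t) = u - t *: (u *m P).
Proof. by rewrite /Phit invmxK mulmxBr mulmx1 scalemxAr. Qed.

Lemma lmetric_PhitE u w :
  lmetric (Phit P t) u w = dot u w + stretch t * dot (u *m P) (w *m P).
Proof. by rewrite /lmetric mulmx_Phit dotDl dotZl !dot_projC projK. Qed.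

Lemma lmetric_PhitC u w : lmetric (Phit P t) u w = lmetric (Phit P t) w u.
Proof. by rewrite !lmetric_PhitE dotC (dotC (w *m P)). Qed.

Lemma lmetric_invPhit u w : lmetric (Phit P t) u (w *m invmx (Phit P t)) = dot u w.
Proof.
rewrite lmetric_PhitE mulmx_invPhit mulmxBl -scalemxAl projK.
rewrite !(dotBr, dotZr) (dot_projC u (w *m P)) projK /stretch.
by field; exact: t1_neq0.
Qed.

Definition nabla A B :=
  2^-1 *: br A B + (stretch t / 2) *: (br B (A *m P) + br A (B *m P)).

Lemma nabla_sym_proj A B : (br B (A *m P) + br A (B *m P)) *m P = 0.
Proof.
have split_l C D : br C (D *m P) = br (C - C *m P) (D *m P) + br (C *m P) (D *m P).
  by rewrite -brDl subrK.
rewrite split_l (split_l A) !mulmxDl.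
rewrite (br_proj_ph (proj_compl B) (projK A)) (br_proj_ph (proj_compl A) (projK B)).
rewrite (br_proj_hh (projK B) (projK A)) (br_proj_hh (projK A) (projK B)).
by rewrite !add0r (brC (B *m P)) addNr.
Qed.

Lemma lmetric_nabla A B W :
  lmetric (Phit P t) (nabla A B) W =
  (lmetric (Phit P t) (br A B) W - lmetric (Phit P t) (br B W) A
   + lmetric (Phit P t) (br W A) B) / 2.
Proof.
have e1 : dot (br B W) A = dot (br W A) B by rewrite dot_brA dotC.
have e2 : dot (br B W *m P) (A *m P) = - dot (br B (A *m P)) W.
  by rewrite dot_projC projK dot_brA (brC W) dotNr -dot_brA.
have e3 : dot (br W A *m P) (B *m P) = dot (br A (B *m P)) W.
  by rewrite dot_projC projK dot_brA dotC.
rewrite !lmetric_PhitE /nabla mulmxDl -scalemxAl nabla_sym_proj scaler0 addr0.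
rewrite -scalemxAl e1 e2 e3 !(dotDl, dotZl).
by field.
Qed.

Lemma lc_connE A B : lc_conn (Phit P t) br A B = nabla A B.
Proof.
rewrite /lc_conn; apply: (canLR (mulmxK Phit_unit)).
by apply/rowP => j; rewrite mxE -lmetric_nabla /lmetric dot_delta.
Qed.

Lemma lmetric_nabla_skew A B W :
  lmetric (Phit P t) (nabla A B) W = - lmetric (Phit P t) B (nabla A W).
Proof.
rewrite (lmetric_PhitC B) !lmetric_nabla (brC B A) (brC W B) (brC A W).
rewrite /lmetric !mulNmx !dotNl -/(lmetric _ _ _) (lmetric_PhitC (br A B)).
by field.
Qed.

Lemma seccurv_nabla A B :
  seccurv (Phit P t) br A B =
  - lmetric (Phit P t) (nabla B B) (nabla A A) + lmetric (Phit P t) (nabla A B) (nabla B A)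
  - lmetric (Phit P t) (nabla (br A B) B) A.
Proof.
rewrite /seccurv /curv !lc_connE !lmetricBl.
by rewrite (lmetric_nabla_skew A (nabla B B)) (lmetric_nabla_skew B (nabla A B)) opprK.
Qed.

Lemma invPhit_split x u : x *m P = x -> u *m P = 0 ->
  (x + u) *m invmx (Phit P t) = u + (1 - t) *: x.
Proof. by move=> hx hu; rewrite mulmx_invPhit mulmxDl hx hu addr0; dot_ring. Qed.

Lemma nabla_split_diag x u : x *m P = x -> u *m P = 0 ->
  nabla (u + (1 - t) *: x) (u + (1 - t) *: x) = t *: br u x.
Proof.
move=> hx hu; rewrite /nabla brxx scaler0 add0r proj_split // brDl !brZr brZl brxx.
by apply: dot_inj => w; rewrite !(dotDl, dotZl, dot0l) /stretch; field; exact: t1_neq0.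
Qed.

Lemma nabla_split x y u v : x *m P = x -> y *m P = y -> u *m P = 0 -> v *m P = 0 ->
  nabla (u + (1 - t) *: x) (v + (1 - t) *: y) =
  2^-1 *: br (u + (1 - t) *: x) (v + (1 - t) *: y) + (t / 2) *: (br u y + br v x).
Proof.
move=> hx hy hu hv; rewrite /nabla !proj_split //; congr (_ + _).
rewrite !brDl !brZr !brZl (brC y x).
by apply: dot_inj => w; rewrite !(dotDl, dotNl, dotZl) /stretch; field; exact: t1_neq0.
Qed.

Section SplitVectors.
Variables x y u v : 'rV[R]_n.
Hypotheses (hx : x *m P = x) (hy : y *m P = y) (hu : u *m P = 0) (hv : v *m P = 0).
Local Notation A := (u + (1 - t) *: x).
Local Notation B := (v + (1 - t) *: y).

Lemma lmetric_nabla_split_diag :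
  lmetric (Phit P t) (nabla B B) (nabla A A) = t ^+ 2 * dot (br v y) (br u x).
Proof.
rewrite !nabla_split_diag // lmetric_PhitE -!scalemxAl (br_proj_ph hu hx).
by rewrite scaler0 dot0r mulr0 addr0 dotZl dotZr mulrA -expr2.
Qed.

Lemma lmetric_nabla_split :
  lmetric (Phit P t) (nabla A B) (nabla B A) =
  t ^+ 2 / 4 * sqn (br u y + br v x) - lmetric (Phit P t) (br A B) (br A B) / 4.
Proof.
rewrite !nabla_split // (addrC (br v x)) (brC B A) /sqn !lmetric_PhitE.
have DP : (br u y + br v x) *m P = 0.
  by rewrite mulmxDl (br_proj_ph hu hy) (br_proj_ph hv hx) addr0.
rewrite !mulmxDl -!scalemxAl DP mulNmx !(dotDl, dotDr, dotNl, dotNr, dotZl, dotZr, dot0r).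
by rewrite dot0l (dotC (br u y)) (dotC (br v x)); field.
Qed.

Lemma br_split : br A B = br u v + (1 - t) *: (br u y - br v x) + (1 - t) ^+ 2 *: br x y.
Proof. by rewrite !(brDl, brDr, brZl, brZr) (brC x v); dot_ring. Qed.

Lemma br_split_proj : br A B *m P = br u v *m P + (1 - t) ^+ 2 *: br x y.
Proof.
rewrite br_split !mulmxDl -!scalemxAl mulmxBl (br_proj_ph hu hy) (br_proj_ph hv hx).
by rewrite (br_proj_hh hx hy) subrr scaler0 addr0.
Qed.

(* All terms become Gram entries of c = [u,v], c^h, E = [u,y], F = [v,x], z = [x,y],
   once the Jacobi identity eliminates <[v,y],[u,x]>. *)
Lemma seccurv_Phit_split :
  seccurv (Phit P t) br ((x + u) *m invmx (Phit P t)) ((y + v) *m invmx (Phit P t)) =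
  1/4 * sqn (br (x + u) (y + v)) - 3/4 * sqn (br (x + u) (y + v) *m P) * t
  + 3/4 * sqn (br x y) * t ^+ 2 - 1/4 * sqn (br x y) * t ^+ 3
  - 3/4 * sqn (br u v *m P) * (t ^+ 2 / (1 - t)).
Proof.
rewrite seccurv_nabla [lmetric _ (nabla (br _ _) _) _]lmetric_nabla !lmetric_invPhit.
rewrite !invPhit_split // lmetric_nabla_split_diag lmetric_nabla_split.
rewrite (brC B A) (brC A (br A B)) dotNl !(dot_brA (br A B)) /sqn !lmetric_PhitE.
rewrite (br_proj_split hx hy hu hv) mulNmx br_split_proj br_split.
rewrite !(brDl, brDr, brZl) (brC x v) (brC v u) (brC y x) (brC y u).
have jac : dot (br v y) (br u x) = dot (br u v) (br x y) + dot (br u y) (br v x).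
  by have := dot_br_jacobi u v x y; rewrite (brC y v) dotNr (dotC (br u x)); lra.
rewrite !(dotDl, dotDr, dotNl, dotNr, dotZl, dotZr) jac.
set c := br u v; set cP := c *m P; set E := br u y; set F := br v x; set z := br x y.
have o1 : dot cP E = 0 by rewrite dot_projC (br_proj_ph hu hy) dot0r.
have o2 : dot cP F = 0 by rewrite dot_projC (br_proj_ph hv hx) dot0r.
have o3 : dot E z = 0 by rewrite /z -(br_proj_hh hx hy) -dot_projC (br_proj_ph hu hy) dot0l.
have o4 : dot F z = 0 by rewrite /z -(br_proj_hh hx hy) -dot_projC (br_proj_ph hv hx) dot0l.
have o5 : dot cP cP = dot c cP by rewrite /cP dot_projC projK.
have o6 : dot cP z = dot c z by rewrite dot_projC (br_proj_hh hx hy).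
rewrite ?(dotC cP c) ?(dotC E c) ?(dotC F c) ?(dotC z c) ?(dotC E cP) ?(dotC F cP).
rewrite ?(dotC z cP) ?(dotC F E) ?(dotC z E) ?(dotC z F) ?o1 ?o2 ?o3 ?o4 ?o5 ?o6 /stretch.
by field; exact: t1_neq0.
Qed.

End SplitVectors.

Lemma seccurv_Phit X Y :
  seccurv (Phit P t) br (X *m invmx (Phit P t)) (Y *m invmx (Phit P t)) =
  1/4 * sqn (br X Y) - 3/4 * sqn (br X Y *m P) * t
  + 3/4 * sqn (br (X *m P) (Y *m P)) * t ^+ 2 - 1/4 * sqn (br (X *m P) (Y *m P)) * t ^+ 3
  - 3/4 * sqn (br (X - X *m P) (Y - Y *m P) *m P) * (t ^+ 2 / (1 - t)).
Proof.
have := seccurv_Phit_split (projK X) (projK Y) (proj_compl X) (proj_compl Y).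
by rewrite !(addrC (_ *m P)) !subrK.
Qed.

End DeformedMetric.

Lemma br_proj_abelian X Y : abelian_sub br H ->
  br X Y *m P = br (X - X *m P) (Y - Y *m P) *m P.
Proof.
move=> hab; have := br_proj_split (projK X) (projK Y) (proj_compl X) (proj_compl Y).
by rewrite !(addrC (_ *m P)) !subrK (hab _ _ (proj_sub X) (proj_sub Y)) add0r.
Qed.

End OrthogonalSplitting.

End LieAlgebra.

Unset Implicit Arguments.

Theorem mainTheorem7 (R : realType) (n : nat) (br : 'rV[R]_n -> 'rV[R]_n -> 'rV[R]_n)
  (H P : 'M[R]_n) :
  is_lie_bracket br -> ad_invariant br -> lie_subalgebra br H -> orth_proj H P ->
  forall (X Y : 'rV[R]_n) (t : R), t < 1 ->
  let kappa := seccurv (Phit P t) br (X *m invmx (Phit P t)) (Y *m invmx (Phit P t)) in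
  let Xh := X *m P in let Yh := Y *m P in
  let Xp := X - X *m P in let Yp := Y - Y *m P in
  kappa = 1/4 * sqn (br X Y) - 3/4 * sqn (br X Y *m P) * t
          + 3/4 * sqn (br Xh Yh) * t ^+ 2 - 1/4 * sqn (br Xh Yh) * t ^+ 3
          - 3/4 * sqn (br Xp Yp *m P) * (t ^+ 2 / (1 - t))
  /\ (abelian_sub br H ->
      kappa = 1/4 * sqn (br X Y) - 3/4 * sqn (br X Y *m P) * (t / (1 - t))).
Proof.
move=> hbr had hsub hP X Y t ht kappa Xh Yh Xp Yp.
have kappaE := seccurv_Phit hbr had hP hsub ht X Y.
split=> [|hab]; first exact: kappaE.
rewrite /kappa kappaE (br_proj_abelian hbr had hP hsub X Y hab).
rewrite (hab _ _ (proj_sub hP X) (proj_sub hP Y)) /sqn dot0l.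
have t1_neq0 : 1 - t != 0 by rewrite subr_eq0 gt_eqF.
by field; exact: t1_neq0.
Qed.
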